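(* Let $M$ be an adequate monoid, $\chi:\Sigma\to M$ a function and $\rho$ the map defined below. For every $\Sigma$-tree $X$, $\rho(X)=\rho(\overline{X})$, where $\overline{X}$ is (any representative of) the pruning of $X$.
   Context: Adequate monoid: a monoid $M$ whose idempotents commute and in which every $\mathcal{L}^*$-class and every $\mathcal{R}^*$-class contains an idempotent, where $a\,\mathcal{L}^*\,b$ iff ($ax=ay\Leftrightarrow bx=by$ for all $x,y\in M$) and $a\,\mathcal{R}^*\,b$ iff ($xa=ya\Leftrightarrow xb=yb$ for all $x,y\in M$); $x^+$ and $x^*$ denote the unique idempotents $\mathcal{R}^*$- and $\mathcal{L}^*$-related to $x$. Trees: a $\Sigma$-tree is a finite directed graph whose underlying undirected graph is a tree, each edge $e$ having initial vertex $\alpha(e)$, terminal vertex $\omega(e)$ and label $\lambda(e)\in\Sigma$, with distinguished start and end vertices such that there is a (possibly empty) directed path (the trunk) from start to end vertex; idempotent if start equals end vertex. A morphism $X\to Y$ maps vertices to vertices and edges to edges preserving $\alpha,\omega,\lambda$ and start/end vertices; isomorphisms are bijective morphisms. A retraction is an idempotent morphism $X\to X$, its image a retract; $X$ is pruned if it has no non-identity retraction. Every tree has a pruned retract, unique up to isomorphism; its isomorphism type is $\overline{X}$. $\tau$ (on idempotent trees, values idempotents of $M$) is defined recursively: $\tau(X)=1$ if $X$ has no edges; otherwise with $v$ the start (= end) vertex, for each edge $e$ with $\alpha(e)=v$ let $X_e$ be the component of $X$ minus $e$ containing $\omega(e)$, as an idempotent tree at $\omega(e)$, and for each edge $e$ with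 $\omega(e)=v$ let $X_e$ be the component of $X$ minus $e$ containing $\alpha(e)$, as an idempotent tree at $\alpha(e)$; then $\tau(X)=\prod_{e:\alpha(e)=v}[\chi(\lambda(e))\tau(X_e)]^+\cdot\prod_{e:\omega(e)=v}[\tau(X_e)\chi(\lambda(e))]^*$ (commuting idempotents, order irrelevant). For any tree $X$ with trunk vertices $v_0,\dots,v_n$ in order and $a_i$ the label of the trunk edge from $v_{i-1}$ to $v_i$, let $X_i$ be the component containing $v_i$ of $X$ with all trunk edges removed, as an idempotent tree at $v_i$; $\rho(X)=\tau(X_0)\chi(a_1)\tau(X_1)\cdots\chi(a_n)\tau(X_n)$. Both depend only on isomorphism type. *)

From HB Require Import structures.
From mathcomp Require Import all_boot.
From Stdlib Require Import ClassicalEpsilon.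

Set Implicit Arguments.
Unset Strict Implicit.
Unset Printing Implicit Defensive.

Record monoid := Monoid {
  mcarrier :> Type;
  mmul : mcarrier -> mcarrier -> mcarrier;
  mone : mcarrier;
  mmulA : forall x y z, mmul x (mmul y z) = mmul (mmul x y) z;
  mmul1l : forall x, mmul mone x = x;
  mmul1r : forall x, mmul x mone = x
}.

Section MonoidDefs.
Variable M : monoid.
Local Notation "x * y" := (mmul x y).
Local Notation "1" := (mone M).

Definition idempotent (e : M) : Prop := e * e = e.

Definition Lstar (a b : M) : Prop :=
  forall x y : M, a * x = a * y <-> b * x = b * y.

Definition Rstar (a b : M) : Prop :=
  forall x y : M, x * a = y * a <-> x * b = y * b.

Definition adequate : Prop :=
  [/\ (forall e f : M, idempotent e -> idempotent f -> e * f = f * e),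
      (forall a : M, exists e, idempotent e /\ Lstar a e) &
      (forall a : M, exists e, idempotent e /\ Rstar a e)].

(* x^+ : an (in an adequate monoid, the unique) idempotent R*-related to x *)
Definition mplus (x : M) : M :=
  epsilon (inhabits 1) (fun e => idempotent e /\ Rstar x e).

(* x^* : an (in an adequate monoid, the unique) idempotent L*-related to x *)
Definition mstar (x : M) : M :=
  epsilon (inhabits 1) (fun e => idempotent e /\ Lstar x e).

End MonoidDefs.

Record sgraph (Sigma : Type) := SGraph {
  vert : finType;
  edge : finType;
  alpha : edge -> vert;
  omega : edge -> vert;
  lambda : edge -> Sigma;
  startv : vert;
  endv : vert
}.
Arguments SGraph {Sigma vert edge}.

Section Graphs.
Variable Sigma : Type.
Implicit Types X Y : sgraph Sigma.

(* undirected walks: a step is an edge with a direction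
   (true = traversed from alpha to omega, false = backwards) *)
Definition step_src X (s : edge X * bool) : vert X :=
  if s.2 then alpha s.1 else omega s.1.
Definition step_dst X (s : edge X * bool) : vert X :=
  if s.2 then omega s.1 else alpha s.1.

Fixpoint uwalk X (u : vert X) (s : seq (edge X * bool)) (v : vert X) : bool :=
  match s with
  | [::] => u == v
  | st :: s' => (step_src st == u) && uwalk (step_dst st) s' v
  end.

Definition dpath X (u : vert X) (s : seq (edge X)) (v : vert X) : bool :=
  uwalk u [seq (e, true) | e <- s] v.

Definition connected X : Prop :=
  forall u v : vert X, exists s, uwalk u s v.

(* acyclic underlying undirected graph: every closed walk of positive
   length immediately backtracks along some edge *)
Definition no_backtrack X (s : seq (edge X * bool)) : bool :=
  sorted (fun a b => a.1 != b.1) s.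

Definition uacyclic X : Prop :=
  forall (u : vert X) (s : seq (edge X * bool)),
    uwalk u s u -> no_backtrack s -> s = [::].

Definition is_tree X : Prop :=
  [/\ connected X, uacyclic X & exists s, dpath (startv X) s (endv X)].

Definition is_morph X Y (fv : vert X -> vert Y) (fe : edge X -> edge Y) : Prop :=
  [/\ (forall e, alpha (fe e) = fv (alpha e)),
      (forall e, omega (fe e) = fv (omega e)),
      (forall e, lambda (fe e) = lambda e),
      fv (startv X) = startv Y &
      fv (endv X) = endv Y].

Definition is_iso X Y (fv : vert X -> vert Y) (fe : edge X -> edge Y) : Prop :=
  [/\ is_morph fv fe, bijective fv & bijective fe].

Definition isomorphic X Y : Prop := exists fv fe, @is_iso X Y fv fe.

Definition is_retraction X (fv : vert X -> vert X) (fe : edge X -> edge X) : Prop :=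
  [/\ is_morph fv fe, (forall v, fv (fv v) = fv v) & (forall e, fe (fe e) = fe e)].

Definition pruned X : Prop :=
  forall fv fe, @is_retraction X fv fe ->
    (forall v, fv v = v) /\ (forall e, fe e = e).

Lemma retraction_morph X fv fe : @is_retraction X fv fe -> is_morph fv fe.
Proof. by case. Qed.

Section Image.
Variables (X : sgraph Sigma) (fv : vert X -> vert X) (fe : edge X -> edge X).
Hypothesis Hm : is_morph fv fe.

Definition im_vert := {v : vert X | v \in codom fv}.
Definition im_edge := {e : edge X | e \in codom fe}.

Lemma im_alpha_proof (e : im_edge) : alpha (val e) \in codom fv.
Proof.
case: e => e /= /codomP [e' ->]; case: Hm => Ha _ _ _ _.
by rewrite Ha codom_f.
Qed.

Lemma im_omega_proof (e : im_edge) : omega (val e) \in codom fv.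
Proof.
case: e => e /= /codomP [e' ->]; case: Hm => _ Ho _ _ _.
by rewrite Ho codom_f.
Qed.

Lemma im_start_proof : startv X \in codom fv.
Proof. by case: Hm => _ _ _ <- _; rewrite codom_f. Qed.

Lemma im_end_proof : endv X \in codom fv.
Proof. by case: Hm => _ _ _ _ <-; rewrite codom_f. Qed.

Definition image_graph : sgraph Sigma :=
  @SGraph Sigma im_vert im_edge
    (fun e => exist _ (alpha (val e)) (im_alpha_proof e))
    (fun e => exist _ (omega (val e)) (im_omega_proof e))
    (fun e => lambda (val e))
    (exist _ (startv X) im_start_proof)
    (exist _ (endv X) im_end_proof).
End Image.

Definition retract X fv fe (Hr : @is_retraction X fv fe) : sgraph Sigma :=
  image_graph (retraction_morph Hr).

(* -------- connected component of v in X with the edges F removed,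
            as an idempotent graph based at v ---------------------- *)
Section Component.
Variables (X : sgraph Sigma) (F : {set edge X}) (v : vert X).

Definition adj_minus : rel (vert X) :=
  fun u w => [exists e, (e \notin F) &&
     (((alpha e == u) && (omega e == w)) || ((omega e == u) && (alpha e == w)))].

Definition in_comp (u : vert X) : bool := connect adj_minus v u.

Definition comp_vert := {u : vert X | in_comp u}.
Definition comp_edge :=
  {e : edge X | [&& e \notin F, in_comp (alpha e) & in_comp (omega e)]}.

Lemma comp_alpha_proof (e : comp_edge) : in_comp (alpha (val e)).
Proof. by case: e => e /= /and3P []. Qed.
Lemma comp_omega_proof (e : comp_edge) : in_comp (omega (val e)).
Proof. by case: e => e /= /and3P []. Qed.
Lemma comp_base_proof : in_comp v.
Proof. exact: connect0. Qed.

Definition component : sgraph Sigma :=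
  @SGraph Sigma comp_vert comp_edge
    (fun e => exist _ (alpha (val e)) (comp_alpha_proof e))
    (fun e => exist _ (omega (val e)) (comp_omega_proof e))
    (fun e => lambda (val e))
    (exist _ v comp_base_proof)
    (exist _ v comp_base_proof).
End Component.

Variables (M : monoid) (chi : Sigma -> M).
Local Notation "x * y" := (mmul x y).

(* tau with fuel; on an idempotent graph with at most n edges the fuel
   suffices, since each X_e has strictly fewer edges than X *)
Fixpoint tau_fuel (n : nat) (X : sgraph Sigma) : M :=
  match n with
  | 0 => mone M
  | n'.+1 =>
    let v := startv X in
    \big[@mmul M/mone M]_(e : edge X | alpha e == v)
       mplus (chi (lambda e) * tau_fuel n' (component [set e] (omega e)))
    * \big[@mmul M/mone M]_(e : edge X | omega e == v)
       mstar (tau_fuel n' (component [set e] (alpha e)) * chi (lambda e))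
  end.

Definition tau (X : sgraph Sigma) : M := tau_fuel #|edge X| X.

(* the trunk: the (in a tree, unique) directed path from start to end *)
Definition trunk (X : sgraph Sigma) : seq (edge X) :=
  epsilon (inhabits [::]) (fun s => dpath (startv X) s (endv X)).

Definition rho (X : sgraph Sigma) : M :=
  let T := [set e in trunk X] in
  tau (component T (startv X)) *
  \big[@mmul M/mone M]_(e <- trunk X)
     (chi (lambda e) * tau (component T (omega e))).

End Graphs.

(* Both sides are products along the trunk of [X].  Write tau_F(v) for tau of
   the component of v in X minus the edges F.  Deleting an edge e factors
   tau_F at its endpoints through (chi(lambda e) tau_{F+e}(omega e))^+ and
   (tau_{F+e}(alpha e) chi(lambda e))^*; repeated along the trunk, this
   rewrites rho(X) with every vertex contribution computed with all trunk edges
   removed, and rho(Y) in the same way inside X minus the edges G outside the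
   retract.  A graph morphism g satisfies tau_G(g x) <= tau_F(x) in the
   semilattice of idempotents of the adequate monoid; applied to the retraction
   and to the identity, this makes tau_G agree with tau on all of X at the
   vertices of the retract, which contains the trunk. *)

From HB Require Import structures.
From mathcomp Require Import all_boot.
From Stdlib Require Import ClassicalEpsilon ProofIrrelevance.

Set Implicit Arguments.
Unset Strict Implicit.
Unset Printing Implicit Defensive.

Local Notation "x ⋅ y" := (mmul x y) (at level 40, left associativity).

Definition comm_idem (M : monoid) : Prop :=
  forall e f : M, idempotent e -> idempotent f -> e ⋅ f = f ⋅ e.

Record idm (M : monoid) := Idm { ival :> M; idmP : idempotent ival }.

Lemma ival_inj M : injective (@ival M).
Proof. by move=> [a Ha] [b Hb] /= E; subst; rewrite (proof_irrelevance _ Ha Hb). Qed.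

Lemma idem1 (M : monoid) : idempotent (mone M).
Proof. by rewrite /idempotent mmul1l. Qed.

Lemma idem_mul (M : monoid) (HC : comm_idem M) (e f : M) :
  idempotent e -> idempotent f -> idempotent (e ⋅ f).
Proof.
move=> He Hf; rewrite /idempotent.
by rewrite -mmulA [f ⋅ (e ⋅ f)]mmulA (HC f e) // -mmulA Hf mmulA He.
Qed.

Section IdempotentSemilattice.
Variables (M : monoid) (HC : comm_idem M).

Definition emul (a b : idm M) : idm M := Idm (idem_mul HC (idmP a) (idmP b)).
Definition eone : idm M := Idm (idem1 M).

Lemma emulA : associative emul.
Proof. by move=> a b c; apply: ival_inj; rewrite /= mmulA. Qed.
Lemma emulC : commutative emul.
Proof. by move=> a b; apply: ival_inj; rewrite /= HC //; apply: idmP. Qed.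
Lemma emul1 : left_id eone emul.
Proof. by move=> a; apply: ival_inj; rewrite /= mmul1l. Qed.

HB.instance Definition _ := Monoid.isComLaw.Build (idm M) eone emul emulA emulC emul1.

Lemma ival_big (I : finType) (P : pred I) (f : I -> idm M) :
  \big[@mmul M/mone M]_(i | P i) ival (f i) = ival (\big[emul/eone]_(i | P i) f i).
Proof.
by rewrite (big_morph (@ival M) (op1 := @mmul M) (id1 := mone M) (op2 := emul) (id2 := eone)).
Qed.

Definition idm_le (a b : idm M) : Prop := emul a b = a.

Lemma idm_le_mul a b c : idm_le a b -> idm_le a c -> idm_le a (emul b c).
Proof. by rewrite /idm_le => H1 H2; rewrite emulA H1 H2. Qed.

Lemma idm_le_big (I : finType) (P : pred I) (f : I -> idm M) a :
  (forall i, P i -> idm_le a (f i)) -> idm_le a (\big[emul/eone]_(i | P i) f i).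
Proof.
move=> H; apply: (big_ind (idm_le a)) => //; last exact: idm_le_mul.
by rewrite /idm_le Monoid.mulm1.
Qed.

Lemma idm_le_anti a b : idm_le a b -> idm_le b a -> a = b.
Proof. by rewrite /idm_le => H1 H2; rewrite -H1 emulC H2. Qed.

End IdempotentSemilattice.

Section AdequateMonoid.
Variables (M : monoid) (HM : adequate M).
Local Notation "1" := (mone M).
Local Notation pl := (@mplus M).
Local Notation st := (@mstar M).

Lemma adequate_comm_idem : comm_idem M.
Proof. by case: HM. Qed.
Local Notation HC := adequate_comm_idem.

Lemma plus_spec (x : M) : idempotent (pl x) /\ Rstar x (pl x).
Proof.
apply: (epsilon_spec (inhabits 1) (fun e => idempotent e /\ Rstar x e)).
by case: HM => _ _ /(_ x).
Qed.

Lemma star_spec (x : M) : idempotent (st x) /\ Lstar x (st x).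
Proof.
apply: (epsilon_spec (inhabits 1) (fun e => idempotent e /\ Lstar x e)).
by case: HM => _ /(_ x).
Qed.

Lemma plus_idem (x : M) : idempotent (pl x). Proof. by case: (plus_spec x). Qed.
Lemma star_idem (x : M) : idempotent (st x). Proof. by case: (star_spec x). Qed.

Definition eplus (x : M) : idm M := Idm (plus_idem x).
Definition estar (x : M) : idm M := Idm (star_idem x).

Lemma plusK (x : M) : pl x ⋅ x = x.
Proof.
case: (plus_spec x) => Hi HR.
by have := proj2 (HR (pl x) 1); rewrite !mmul1l; apply; rewrite Hi.
Qed.

Lemma starK (x : M) : x ⋅ st x = x.
Proof.
case: (star_spec x) => Hi HL.
by have := proj2 (HL (st x) 1); rewrite !mmul1r; apply; rewrite Hi.
Qed.

Lemma Rstar_idem_eq (e f : M) : idempotent e -> idempotent f -> Rstar e f -> e = f.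
Proof.
move=> He Hf HR.
have fe : f ⋅ e = e by have := proj2 (HR f 1); rewrite !mmul1l; apply; rewrite Hf.
have ef : e ⋅ f = f by have := proj1 (HR e 1); rewrite !mmul1l; apply; rewrite He.
by rewrite -fe HC.
Qed.

Lemma Lstar_idem_eq (e f : M) : idempotent e -> idempotent f -> Lstar e f -> e = f.
Proof.
move=> He Hf HL.
have ef : e ⋅ f = e by have := proj2 (HL f 1); rewrite !mmul1r; apply; rewrite Hf.
have fe : f ⋅ e = f by have := proj1 (HL e 1); rewrite !mmul1r; apply; rewrite He.
by rewrite -ef HC.
Qed.

Lemma plus_uniq (x e : M) : idempotent e -> Rstar x e -> pl x = e.
Proof.
move=> He HR; case: (plus_spec x) => Hi HR'.
by apply: Rstar_idem_eq => // u w; rewrite -HR'; apply: HR.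
Qed.

Lemma star_uniq (x e : M) : idempotent e -> Lstar x e -> st x = e.
Proof.
move=> He HL; case: (star_spec x) => Hi HL'.
by apply: Lstar_idem_eq => // u w; rewrite -HL'; apply: HL.
Qed.

Lemma plus_id (e : M) : idempotent e -> pl e = e.
Proof. by move=> He; apply: plus_uniq. Qed.

Lemma star_id (e : M) : idempotent e -> st e = e.
Proof. by move=> He; apply: star_uniq. Qed.

Lemma plus_mulr (x y : M) : pl (x ⋅ y) = pl (x ⋅ pl y).
Proof.
apply: plus_uniq; first exact: plus_idem.
move=> u w; case: (plus_spec (x ⋅ pl y)) => _ HR; rewrite -HR.
by case: (plus_spec y) => _ Hy; rewrite !mmulA; apply: Hy.
Qed.

Lemma star_mull (x y : M) : st (x ⋅ y) = st (st x ⋅ y).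
Proof.
apply: star_uniq; first exact: star_idem.
move=> u w; case: (star_spec (st x ⋅ y)) => _ HL; rewrite -HL.
by case: (star_spec x) => _ Hx; rewrite -!mmulA; apply: Hx.
Qed.

Lemma plus_idl (e x : M) : idempotent e -> pl (e ⋅ x) = e ⋅ pl x.
Proof. by move=> He; rewrite plus_mulr plus_id //; exact: (idem_mul HC He (plus_idem x)). Qed.

Lemma star_idr (e x : M) : idempotent e -> st (x ⋅ e) = st x ⋅ e.
Proof. by move=> He; rewrite star_mull star_id //; exact: (idem_mul HC (star_idem x) He). Qed.

Lemma plus_mul_le (x y : M) : pl x ⋅ pl (x ⋅ y) = pl (x ⋅ y).
Proof.
case: (plus_spec (x ⋅ y)) => _ HR.
by have := proj1 (HR (pl x) 1); rewrite !mmul1l; apply; rewrite mmulA plusK.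
Qed.

Lemma star_mul_le (x y : M) : st (x ⋅ y) ⋅ st y = st (x ⋅ y).
Proof.
case: (star_spec (x ⋅ y)) => _ HL.
by have := proj1 (HL (st y) 1); rewrite !mmul1r; apply; rewrite -mmulA starK.
Qed.

Lemma le_plus_of_le_star (A B C x : M) :
  idempotent A -> idempotent B -> idempotent C ->
  st (A ⋅ x) ⋅ B ⋅ C = st (A ⋅ x) ⋅ B ->
  A ⋅ pl (x ⋅ B) ⋅ pl (x ⋅ C) = A ⋅ pl (x ⋅ B).
Proof.
move=> IA IB IC H.
set D := st (A ⋅ x) ⋅ B.
have ID : idempotent D := idem_mul HC (star_idem _) IB.
have AxB_D : A ⋅ pl (x ⋅ B) = A ⋅ pl (x ⋅ D).
  by rewrite -!plus_idl //; congr (pl _); rewrite /D !mmulA starK.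
have D_C : D = C ⋅ D by rewrite -HC // -H.
have xD_xC : pl (x ⋅ D) ⋅ pl (x ⋅ C) = pl (x ⋅ D).
  by rewrite HC; [rewrite D_C mmulA plus_mul_le | apply: plus_idem ..].
by rewrite AxB_D -mmulA xD_xC.
Qed.

Lemma le_star_of_le_plus (A B C x : M) :
  idempotent A -> idempotent B -> idempotent C ->
  A ⋅ pl (x ⋅ B) ⋅ C = A ⋅ pl (x ⋅ B) ->
  st (A ⋅ x) ⋅ B ⋅ st (C ⋅ x) = st (A ⋅ x) ⋅ B.
Proof.
move=> IA IB IC H.
set D := A ⋅ pl (x ⋅ B).
have ID : idempotent D := idem_mul HC IA (plus_idem _).
have AxB_D : st (A ⋅ x) ⋅ B = st (D ⋅ x) ⋅ B.
  rewrite -!star_idr //; congr (st _).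
  by rewrite /D -(mmulA A x B) -{1}(plusK (x ⋅ B)) !mmulA.
have Dx_Cx : st (D ⋅ x) ⋅ st (C ⋅ x) = st (D ⋅ x).
  have -> : D ⋅ x = D ⋅ (C ⋅ x) by rewrite mmulA H.
  exact: star_mul_le.
rewrite AxB_D -mmulA [B ⋅ _]HC; [|exact: IB|exact: star_idem].
by rewrite mmulA Dx_Cx.
Qed.

(* For [l = [:: (c_1, b_1); ...; (c_n, b_n)]], [pair_prod a l] is
   [a c_1 b_1 ... c_n b_n]; [plus_nest] and [star_nest] are the nested
   forms in which this product arises when rho is read off a trunk
   [v_0 --c_1--> v_1 ... --c_n--> v_n] whose vertex contributions [b_i] are
   computed with all trunk edges removed. *)
Definition pair_prod (a : M) (l : seq (M * idm M)) : M :=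
  a ⋅ \big[@mmul M/1]_(p <- l) (p.1 ⋅ p.2).

Fixpoint plus_nest (a : M) (l : seq (M * idm M)) : M :=
  if l is (c, b) :: l' then a ⋅ pl (c ⋅ plus_nest b l') else a.

Fixpoint star_nest (L a : M) (l : seq (M * idm M)) : M :=
  if l is (c, b) :: l' then
    L ⋅ a ⋅ pl (c ⋅ plus_nest b l') ⋅ c ⋅ star_nest (st (L ⋅ a ⋅ c)) b l'
  else L ⋅ a.

Lemma plus_nestE a l : idempotent a -> plus_nest a l = pl (pair_prod a l).
Proof.
elim: l a => [|[c b] l IH] a Ia /=.
  by rewrite /pair_prod big_nil mmul1r plus_id.
rewrite IH; last exact: idmP.
by rewrite /pair_prod big_cons -plus_mulr -plus_idl // !mmulA.
Qed.

Lemma idem_mul_rotate (e f g x : M) :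
  idempotent e -> idempotent f -> idempotent g ->
  e ⋅ (f ⋅ (g ⋅ x)) = f ⋅ (g ⋅ (e ⋅ x)).
Proof.
move=> Ie If Ig.
by rewrite (mmulA e f) (HC Ie If) -(mmulA f e) (mmulA e g) (HC Ie Ig) -(mmulA g e).
Qed.

Lemma star_nest_pair_prod (P L a : M) l : idempotent L -> idempotent a ->
  P ⋅ L = P -> P ⋅ star_nest L a l = P ⋅ pair_prod a l.
Proof.
elim: l P L a => [|[c b] l IH] P L a IL Ia /= PL.
  by rewrite /pair_prod big_nil mmul1r mmulA PL.
set R := plus_nest b l.
have -> : P ⋅ (L ⋅ a ⋅ pl (c ⋅ R) ⋅ c ⋅ star_nest (st (L ⋅ a ⋅ c)) b l) =
          P ⋅ pl (c ⋅ R) ⋅ (L ⋅ a ⋅ c) ⋅ star_nest (st (L ⋅ a ⋅ c)) b l.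
  by rewrite -!mmulA; congr (P ⋅ _); rewrite [RHS]idem_mul_rotate //; apply: plus_idem.
rewrite IH; [| exact: star_idem | exact: idmP | by rewrite -mmulA starK].
rewrite /R plus_nestE; last exact: idmP.
rewrite -plus_mulr /pair_prod big_cons /=.
set W := \big[@mmul M/1]_(p <- l) (p.1 ⋅ p.2).
have -> : P ⋅ pl (c ⋅ (b ⋅ W)) ⋅ (L ⋅ a ⋅ c) ⋅ (b ⋅ W) =
          P ⋅ (L ⋅ a) ⋅ (pl (c ⋅ (b ⋅ W)) ⋅ (c ⋅ (b ⋅ W))).
  by rewrite -!mmulA; congr (P ⋅ _); rewrite idem_mul_rotate //; apply: plus_idem.
by rewrite plusK (mmulA P L a) PL -!mmulA.
Qed.

End AdequateMonoid.

Section TauMinus.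
Variables (Sigma : Type) (M : monoid) (HM : adequate M) (chi : Sigma -> M).
Local Notation EM := (emul (adequate_comm_idem HM)).
Local Notation E1 := (eone M).

(* [tau] of the component of [v] in [X] minus the edges [F], computed inside
   [X] itself: removing an edge only enlarges [F], so no subgraph is built. *)
Fixpoint tau_minus_fuel (X : sgraph Sigma) (n : nat) (F : {set edge X}) (v : vert X)
    : idm M :=
  if n is n'.+1 then
    EM (\big[EM/E1]_(e | (e \notin F) && (alpha e == v))
          eplus HM (chi (lambda e) ⋅ tau_minus_fuel n' (e |: F) (omega e)))
       (\big[EM/E1]_(e | (e \notin F) && (omega e == v))
          estar HM (tau_minus_fuel n' (e |: F) (alpha e) ⋅ chi (lambda e)))
  else E1.

Section Embedding.
Variables (H G : sgraph Sigma) (iv : vert H -> vert G) (ie : edge H -> edge G)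
  (F : {set edge G}).
Hypotheses (iv_inj : injective iv) (ie_inj : injective ie)
  (ie_alpha : forall e, alpha (ie e) = iv (alpha e))
  (ie_omega : forall e, omega (ie e) = iv (omega e))
  (ie_lambda : forall e, lambda (ie e) = lambda e)
  (ie_notin : forall e, ie e \notin F)
  (ie_cover : forall h e, e \notin F -> (alpha e = iv h \/ omega e = iv h) ->
     exists e', ie e' = e).

Lemma big_embed_reindex (F' : {set edge H}) (h : vert H)
    (endG : edge G -> vert G) (endH : edge H -> vert H)
    (end_ie : forall e, endG (ie e) = iv (endH e))
    (end_incident : forall e, endG e = iv h -> alpha e = iv h \/ omega e = iv h)
    (g : edge G -> idm M) :
  \big[EM/E1]_(e | (e \notin F') && (endH e == h)) g (ie e) =
  \big[EM/E1]_(e | (e \notin F :|: ie @: F') && (endG e == iv h)) g e.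
Proof.
transitivity (\big[EM/E1]_(e in [set e | (e \notin F') && (endH e == h)]) g (ie e)).
  by apply: eq_bigl => e; rewrite inE.
rewrite -(big_imset (aop := EM) (h := ie) g); last by move=> x y _ _; apply: ie_inj.
rewrite big_mkcond [RHS]big_mkcond /=; apply: eq_bigr => i _.
rewrite [in RHS]inE negb_or.
case: (boolP (i \in _)) => [/imsetP [e]|Hni].
  rewrite inE => /andP [HF' /eqP He] ->.
  by rewrite ie_notin /= end_ie He eqxx andbT (mem_imset _ _ ie_inj) HF'.
case: (boolP (i \notin F)) => //= HiF.
case: (boolP (endG i == iv h)) => /eqP Hend; last by rewrite andbF.
have [e' He'] := @ie_cover h i HiF (end_incident _ Hend); subst i.
rewrite (mem_imset _ _ ie_inj) /=.
case: (boolP (e' \in F')) => //= He'F.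
exfalso; move/negP: Hni; apply; apply/imsetP; exists e' => //.
by rewrite inE He'F /= -(inj_eq iv_inj) -end_ie Hend.
Qed.

Lemma tau_minus_fuel_embed n F' h :
  tau_minus_fuel n F' h = tau_minus_fuel n (F :|: ie @: F') (iv h).
Proof.
elim: n F' h => [//|n IH] F' h /=.
congr EM.
- pose g e := eplus HM (chi (lambda e) ⋅
                tau_minus_fuel n (e |: (F :|: ie @: F')) (omega e)).
  transitivity (\big[EM/E1]_(e | (e \notin F') && (alpha e == h)) g (ie e)).
    by apply: eq_bigr => e _; rewrite /g IH ie_lambda ie_omega imsetU1 setUCA.
  by apply: big_embed_reindex => // e ->; left.
- pose g e := estar HM (tau_minus_fuel n (e |: (F :|: ie @: F')) (alpha e) ⋅
                chi (lambda e)).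
  transitivity (\big[EM/E1]_(e | (e \notin F') && (omega e == h)) g (ie e)).
    by apply: eq_bigr => e _; rewrite /g IH ie_lambda ie_alpha imsetU1 setUCA.
  by apply: big_embed_reindex => // e ->; right.
Qed.

End Embedding.

Lemma cardsC_setU1 (T : finType) (e : T) (F : {set T}) :
  e \notin F -> #|~: (e |: F)|.+1 = #|~: F|.
Proof.
move=> HeF; rewrite [RHS](cardsD1 e) inE HeF /= add1n; congr _.+1.
by apply: eq_card => x; rewrite !inE negb_or andbC.
Qed.

Lemma tau_minus_fuel_all_removed (X : sgraph Sigma) n (F : {set edge X}) v :
  #|~: F| = 0 -> tau_minus_fuel n F v = E1.
Proof.
move=> H0; case: n => //= n.
have HF (e : edge X) : (e \notin F) = false.
  apply/negbTE; rewrite -in_setC; apply/negP => He.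
  by move: H0; rewrite (cardsD1 e) He.
by rewrite !big_pred0 => [|e|e]; rewrite ?HF // Monoid.mulm1.
Qed.

Lemma tau_minus_fuel_enough (X : sgraph Sigma) n m (F : {set edge X}) v :
  #|~: F| <= n -> #|~: F| <= m -> tau_minus_fuel n F v = tau_minus_fuel m F v.
Proof.
elim: n m F v => [|n IH] [|m] F v Hn Hm.
- by [].
- by rewrite [RHS]tau_minus_fuel_all_removed //; apply/eqP; rewrite -leqn0.
- by rewrite tau_minus_fuel_all_removed //; apply/eqP; rewrite -leqn0.
rewrite /=; congr EM; apply: eq_bigr => e /andP [HeF _];
  by rewrite (IH m) // -ltnS cardsC_setU1.
Qed.

Lemma tau_minus_fuel_component (G : sgraph Sigma) (F : {set edge G}) v n F' h :
  tau_minus_fuel (X := component F v) n F' h =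
  tau_minus_fuel n (F :|: val @: F') (val h).
Proof.
apply: tau_minus_fuel_embed => //; try exact: val_inj.
- by case=> e /= /and3P [].
move=> h' e HeF Hinc.
have Hh := valP h'.
have reach (w : vert G) : adj_minus F (val h') w -> in_comp F v w.
  by move=> Hw; apply: connect_trans Hh (connect1 Hw).
have [Ha Ho] : in_comp F v (alpha e) /\ in_comp F v (omega e).
  case: Hinc => E; rewrite E; split => //; apply: reach; apply/existsP;
    by exists e; rewrite HeF E !eqxx ?orbT.
by exists (exist _ e (introT and3P (And3 HeF Ha Ho))).
Qed.

Lemma tau_fuel_minus (G : sgraph Sigma) n :
  tau_fuel chi n G = tau_minus_fuel n set0 (startv G).
Proof.
elim: n G => [//|n IH] G /=.
rewrite -!ival_big; congr mmul.
- apply: eq_big => [e|e _]; first by rewrite inE.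
  by rewrite /= IH tau_minus_fuel_component /= imset0 setU0.
- apply: eq_big => [e|e _]; first by rewrite inE.
  by rewrite /= IH tau_minus_fuel_component /= imset0 setU0.
Qed.

Definition tau_minus (X : sgraph Sigma) (F : {set edge X}) (v : vert X) : idm M :=
  tau_minus_fuel #|edge X| F v.

Lemma tau_component (G : sgraph Sigma) (F : {set edge G}) v N :
  #|edge G| <= N -> tau chi (component F v) = tau_minus_fuel N F v.
Proof.
move=> HN.
have HC : #|edge (component F v)| <= #|edge G|.
  by apply: (leq_card (fun e : edge (component F v) => val e)) => x y; apply: val_inj.
rewrite /tau tau_fuel_minus (@tau_minus_fuel_enough _ _ N).
- by rewrite tau_minus_fuel_component imset0 setU0.
- exact: max_card.
- exact: leq_trans (max_card _) (leq_trans HC HN).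
Qed.

Lemma tau_minusE (X : sgraph Sigma) (F : {set edge X}) v :
  tau_minus F v =
  EM (\big[EM/E1]_(e | (e \notin F) && (alpha e == v))
        eplus HM (chi (lambda e) ⋅ tau_minus (e |: F) (omega e)))
     (\big[EM/E1]_(e | (e \notin F) && (omega e == v))
        estar HM (tau_minus (e |: F) (alpha e) ⋅ chi (lambda e))).
Proof.
rewrite /tau_minus; case HN: #|edge X| => [|N].
  have no_edge (e : edge X) : False by move: HN; rewrite (cardD1 e).
  by rewrite !big_pred0 ?Monoid.mulm1 // => e; case: (no_edge e).
have Hc e : e \notin F -> #|~: (e |: F)| <= N.
  by move=> HeF; rewrite -ltnS cardsC_setU1 // -HN; apply: max_card.
rewrite /=; congr EM; apply: eq_bigr => e /andP [HeF _];
  by rewrite (@tau_minus_fuel_enough _ N N.+1) ?(leqW (Hc e HeF)) ?Hc.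
Qed.

End TauMinus.


Lemma all_notin_set1 (T : finType) (e : T) (s : seq T) :
  e \notin s -> all (fun x => x \notin [set e]) s.
Proof. by move=> He; apply/allP => x Hx; rewrite inE; apply: contraNneq He => <-. Qed.

Section AcyclicGraph.
Variables (Sigma : Type) (X : sgraph Sigma) (Hac : uacyclic X).

Implicit Types (F : {set edge X}) (u v w x y z : vert X) (e f : edge X).

Lemma adj_minus_sym F : symmetric (adj_minus F).
Proof.
move=> u w; apply/existsP/existsP => -[e /andP [HF H]]; exists e; rewrite HF /=;
  by case/orP: H => /andP [-> ->]; rewrite ?orbT.
Qed.

Lemma connect_minus_sym F u w : connect (adj_minus F) u w = connect (adj_minus F) w u.
Proof. by rewrite (sym_connect_sym (adj_minus_sym F)). Qed.

Lemma adj_minus_edge F e : e \notin F -> adj_minus F (alpha e) (omega e).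
Proof. move=> HF; apply/existsP; exists e; by rewrite HF !eqxx. Qed.

Lemma connect_minus_sub F F' u w : F \subset F' ->
  connect (adj_minus F') u w -> connect (adj_minus F) u w.
Proof.
move=> HS; apply: connect_sub => a b /existsP [e /andP [HF H]]; apply: connect1.
apply/existsP; exists e; rewrite H andbT.
by apply: contra HF; apply: (subsetP HS).
Qed.

Lemma connect_minus_alpha_omega F e u : e \notin F ->
  connect (adj_minus F) u (alpha e) = connect (adj_minus F) u (omega e).
Proof.
move=> HF; apply/idP/idP => H.
  by apply: connect_trans H (connect1 (adj_minus_edge HF)).
apply: connect_trans H (connect1 _); by rewrite adj_minus_sym adj_minus_edge.
Qed.

Lemma uwalk_connect F u s w : uwalk u s w -> all (fun st => st.1 \notin F) s ->
  connect (adj_minus F) u w.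
Proof.
elim: s u => [|[e b] s IH] u /=; first by move/eqP ->.
move=> /andP [/eqP Hs Hw] /andP [HF Hall].
apply: connect_trans (IH _ Hw Hall); apply: connect1; rewrite -Hs.
case: b {Hs Hw} => /=; first exact: adj_minus_edge.
by rewrite adj_minus_sym adj_minus_edge.
Qed.

Lemma path_uwalk F x p : path (adj_minus F) x p -> uniq (x :: p) ->
  exists s, [&& uwalk x s (last x p), no_backtrack s,
             all (fun st => st.1 \notin F) s & map (@step_dst _ X) s == p].
Proof.
elim: p x => [|y p IH] x /=.
  by move=> _ _; exists [::]; rewrite /= eqxx.
move=> /andP [Hxy Hp] /andP [Hx Hu].
have [s' /and4P [Hw Hnb Hall /eqP Hmap]] := IH y Hp Hu.
move/existsP: Hxy => [e /andP [HF Hdir]].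
have [b [Hsrc Hdst]] : exists b, step_src (e, b) = x /\ step_dst (e, b) = y.
  case/orP: Hdir => /andP [/eqP H1 /eqP H2]; [exists true | exists false]; by [].
subst p.
exists ((e, b) :: s'); rewrite /= Hsrc Hdst eqxx Hw HF Hall eqxx /= !andbT.
rewrite /no_backtrack /=.
clear IH Hp; case: s' Hw Hnb Hall Hx Hu => [//|[e2 b2] s''] /= Hw Hnb Hall Hx Hu.
rewrite Hnb andbT.
move: Hw => /andP [/eqP Hsrc2 _].
apply/eqP => Hee; subst e2.
move: Hx; rewrite !inE !negb_or => /and3P [Hxy Hxz _].
move: Hu => /andP [Hyp _]; move: Hyp; rewrite !inE negb_or => /andP [Hyz _].
clear Hnb Hall; case: b b2 Hsrc Hdst Hsrc2 Hxy Hxz Hyz => [] [] Hsrc Hdst Hsrc2 Hxy Hxz Hyz;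
  rewrite /= in Hsrc Hdst Hsrc2 Hxz Hyz; subst x y;
  by rewrite ?Hsrc2 ?eqxx in Hxy Hxz Hyz.
Qed.

Lemma connect_uwalk F u w : connect (adj_minus F) u w ->
  exists s, [&& uwalk u s w, no_backtrack s & all (fun st => st.1 \notin F) s].
Proof.
move/connectP => [p Hp ->].
case: (shortenP Hp) => p' Hp' Hu _.
have [s /and4P [H1 H2 H3 _]] := path_uwalk Hp' Hu.
by exists s; rewrite H1 H2 H3.
Qed.

Lemma alpha_neq_omega e : alpha e != omega e.
Proof.
apply/negP => /eqP H.
have Hw : uwalk (alpha e) [:: (e, true)] (alpha e) by rewrite /= eqxx /= H eqxx.
by have := Hac Hw isT.
Qed.

Lemma cut_edge_omega_alpha e : ~~ connect (adj_minus [set e]) (omega e) (alpha e).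
Proof.
apply/negP => /connect_uwalk [s /and3P [Hw Hnb Hall]].
have Hw' : uwalk (alpha e) ((e, true) :: s) (alpha e)
  by rewrite /= /step_src /step_dst /= eqxx.
have Hnb' : no_backtrack ((e, true) :: s).
  move: Hnb Hall; rewrite /no_backtrack; clear Hw Hw'.
  by case: s => [//|st s] /= -> /andP [Hst _]; rewrite andbT; move: Hst; rewrite inE eq_sym.
by have := Hac Hw' Hnb'.
Qed.

Lemma cut_edge_alpha_omega e : ~~ connect (adj_minus [set e]) (alpha e) (omega e).
Proof. by rewrite connect_minus_sym cut_edge_omega_alpha. Qed.

Lemma uwalk_cat u s1 s2 w :
  uwalk u (s1 ++ s2) w = uwalk u s1 (last u (map (@step_dst _ X) s1)) &&
                         uwalk (last u (map (@step_dst _ X) s1)) s2 w.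
Proof.
elim: s1 u => [|st s1 IH] u /=; first by rewrite eqxx.
by rewrite IH andbA.
Qed.

Lemma uwalk_last u s w : uwalk u s w -> w = last u (map (@step_dst _ X) s).
Proof. elim: s u => [|st s IH] u /=; [by move/eqP | by case/andP => _ /IH]. Qed.

Lemma dpath_no_backtrack u s w : dpath u s w -> no_backtrack [seq (e, true) | e <- s].
Proof.
rewrite /dpath /no_backtrack.
elim: s u => [//|e s IH] u /= /andP [_ Hw].
have := IH _ Hw.
case: s {IH} Hw => [//|e2 s] /= Hw ->; rewrite andbT.
move: Hw => /andP [/eqP H _]; apply/eqP => He; subst e2.
rewrite /step_src /step_dst /= in H; by move: (alpha_neq_omega e); rewrite H eqxx.
Qed.

Lemma dpath_cycle u s : dpath u s u -> s = [::].
Proof.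
move=> H; have := Hac H (dpath_no_backtrack H).
by case: s {H}.
Qed.

Lemma dpath_cons u e s w : dpath u (e :: s) w = (alpha e == u) && dpath (omega e) s w.
Proof. by []. Qed.

Lemma dpath_cat u p q w :
  dpath u (p ++ q) w =
  dpath u p (last u (map (@omega _ X) p)) && dpath (last u (map (@omega _ X) p)) q w.
Proof.
rewrite /dpath map_cat uwalk_cat -map_comp.
by have -> : (@step_dst _ X) \o (fun e => (e, true)) = (@omega _ X) by [].
Qed.

Lemma dpath_last u s w : dpath u s w -> w = last u (map (@omega _ X) s).
Proof.
move/uwalk_last ->; by rewrite -map_comp.
Qed.

Lemma dpath_split u p e q w : dpath u (p ++ e :: q) w ->
  dpath u p (alpha e) /\ dpath (omega e) q w.
Proof.
rewrite dpath_cat dpath_cons => /and3P [H1 /eqP H2 H3].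
by rewrite H2; split.
Qed.

Lemma dpath_omega_notin f e s w : dpath (omega f) s w -> alpha e = alpha f -> e \notin s.
Proof.
move=> Hd Ha; apply/negP => Hin.
case/splitPr: Hin Hd => a b /dpath_split [Ha' _].
have : dpath (alpha f) (f :: a) (alpha f) by rewrite dpath_cons eqxx -Ha.
by move/dpath_cycle.
Qed.

Lemma dpath_alpha_notin u e s : dpath u s (alpha e) -> e \notin s.
Proof.
move=> Hd; apply/negP => Hin.
case/splitPr: Hin Hd => a b /dpath_split [_ Hb].
have : dpath (alpha e) (e :: b) (alpha e) by rewrite dpath_cons eqxx.
by move/dpath_cycle.
Qed.

Lemma dpath_connect F z q w : dpath z q w -> all (fun e => e \notin F) q ->
  connect (adj_minus F) z w.
Proof.
move=> Hd Hall; apply: uwalk_connect Hd _.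
by rewrite all_map.
Qed.

Lemma dpath_uniq u s1 s2 w : dpath u s1 w -> dpath u s2 w -> s1 = s2.
Proof.
elim: s1 u s2 => [|e s1 IH] u s2.
  by move=> /eqP <- /dpath_cycle.
case: s2 => [|f s2].
  by move=> H /eqP Hw; subst w; move/dpath_cycle: H.
rewrite !dpath_cons => /andP [/eqP Hae H1] /andP [/eqP Haf H2].
case: (eqVneq e f) => [Hef|Hne]; first by subst f; rewrite (IH _ _ H1 H2).
exfalso.
have He1 : e \notin s1 by apply: dpath_omega_notin H1 _.
have He2 : e \notin s2 by apply: dpath_omega_notin H2 _; rewrite Hae Haf.
have C1 := dpath_connect H1 (all_notin_set1 He1).
have C2 := dpath_connect H2 (all_notin_set1 He2).
have C3 : connect (adj_minus [set e]) (omega f) (alpha f).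
  by apply: connect1; rewrite adj_minus_sym adj_minus_edge // inE eq_sym.
have : connect (adj_minus [set e]) (omega e) (alpha e).
  rewrite Hae -Haf; apply: connect_trans C1 _; rewrite connect_minus_sym in C2.
  by apply: connect_trans C2 C3.
by apply/negP; apply: cut_edge_omega_alpha.
Qed.

Lemma dpath_alpha_mem z q w e : dpath z q w -> e \in q ->
  alpha e \in z :: map (@omega _ X) q.
Proof.
elim: q z => [//|e' q IH] z; rewrite dpath_cons => /andP [/eqP Ha Hd] /=.
rewrite inE => /orP [/eqP ->|Hin]; first by rewrite Ha mem_head.
by rewrite inE (IH _ Hd Hin) orbT.
Qed.

Lemma dpath_connect_from F z q w y : dpath z q w -> all (fun e => e \notin F) q ->
  y \in z :: map (@omega _ X) q -> connect (adj_minus F) z y.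
Proof.
elim: q z => [|e q IH] z /=.
  by move=> _ _; rewrite inE => /eqP ->.
rewrite dpath_cons => /andP [/eqP Ha Hd] /andP [HF Hall].
rewrite inE => /orP [/eqP ->|Hin]; first exact: connect0.
apply: connect_trans (IH _ Hd Hall Hin); apply: connect1; rewrite -Ha.
exact: adj_minus_edge.
Qed.

Lemma dpath_connect_to F z p m x : dpath z p m -> all (fun e => e \notin F) p ->
  x \in z :: map (@omega _ X) p -> connect (adj_minus F) x m.
Proof.
move=> Hd Hall Hx.
have Hzx := dpath_connect_from Hd Hall Hx.
have Hzm : connect (adj_minus F) z m.
  rewrite (dpath_last Hd); apply: dpath_connect_from Hd Hall _; exact: mem_last.
rewrite connect_minus_sym in Hzx; exact: connect_trans Hzx Hzm.
Qed.

Lemma dpath_edge_separates u p e q w x y : dpath u (p ++ e :: q) w ->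
  x \in u :: map (@omega _ X) p -> y \in omega e :: map (@omega _ X) q ->
  ~~ connect (adj_minus [set e]) x y.
Proof.
move=> Hd Hx Hy; have [Hp Hq] := dpath_split Hd.
have Hep : e \notin p := dpath_alpha_notin Hp.
have Heq : e \notin q by apply: dpath_omega_notin Hq _.
apply/negP => Hxy.
have C1 := dpath_connect_to Hp (all_notin_set1 Hep) Hx.
have C2 := dpath_connect_from Hq (all_notin_set1 Heq) Hy.
have : connect (adj_minus [set e]) (alpha e) (omega e).
  rewrite connect_minus_sym in C1; rewrite connect_minus_sym in C2.
  by apply: connect_trans (connect_trans C1 Hxy) C2.
by apply/negP; apply: cut_edge_alpha_omega.
Qed.

End AcyclicGraph.

Section AcyclicTau.
Variables (Sigma : Type) (M : monoid) (HM : adequate M) (chi : Sigma -> M).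
Variables (X : sgraph Sigma) (Hac : uacyclic X).
Local Notation EM := (emul (adequate_comm_idem HM)).
Local Notation pl := (@mplus M).
Local Notation T := (tau_minus_fuel HM chi (X := X)).
Local Notation tm := (tau_minus HM chi (X := X)).

Implicit Types (F : {set edge X}) (u v w x y z : vert X) (e f : edge X).

Lemma tau_minus_fuel_setU1_unreachable n F v e :
  (e \notin F -> ~~ connect (adj_minus F) v (alpha e)) -> T n (e |: F) v = T n F v.
Proof.
case: (boolP (e \in F)) => HeF H; first by congr T; apply/setUidPr; rewrite sub1set.
move: H => /(_ isT) H.
elim: n F v HeF H => [//|n IH] F v HeF H /=.
congr EM.
- apply: eq_big => e'.
    rewrite !inE negb_or; case: (eqVneq e' e) => [->|//] /=.
    rewrite HeF /=; apply/esym/negbTE; apply: contra H => /eqP <-; exact: connect0.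
  rewrite !inE negb_or => /andP [/andP [Hne HF'] /eqP Ha].
  rewrite setUCA IH //.
    by rewrite !inE negb_or eq_sym Hne.
  apply: contra H => Hc.
  have Hc' := connect_minus_sub (subsetUr [set e'] F) Hc.
  apply: connect_trans Hc'; rewrite -Ha; apply: connect1; exact: adj_minus_edge.
- apply: eq_big => e'.
    rewrite !inE negb_or; case: (eqVneq e' e) => [->|//] /=.
    rewrite HeF /=; apply/esym/negbTE; apply: contra H => /eqP <-.
    by apply: connect1; rewrite adj_minus_sym adj_minus_edge.
  rewrite !inE negb_or => /andP [/andP [Hne HF'] /eqP Ha].
  rewrite setUCA IH //.
    by rewrite !inE negb_or eq_sym Hne.
  apply: contra H => Hc.
  have Hc' := connect_minus_sub (subsetUr [set e'] F) Hc.
  apply: connect_trans Hc'; rewrite -Ha; apply: connect1; by rewrite adj_minus_sym adj_minus_edge.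
Qed.

Lemma tau_minus_fuel_setU_unreachable n F v (l : seq (edge X)) :
  (forall e, e \in l -> e \notin F -> ~~ connect (adj_minus F) v (alpha e)) ->
  T n (F :|: [set x in l]) v = T n F v.
Proof.
elim: l F => [|a l IH] F H; first by rewrite set_nil setU0.
rewrite set_cons setUCA setUA IH => [|e Hel]; last first.
  rewrite inE negb_or => /andP [_ HeF].
  apply: contra (H e _ HeF); last by rewrite inE Hel orbT.
  by apply: connect_minus_sub; apply: subsetUr.
by apply: tau_minus_fuel_setU1_unreachable => HaF; apply: H HaF; apply: mem_head.
Qed.

Lemma tau_minus_split_out F e : e \notin F ->
  tm F (alpha e) =
  EM (tm (e |: F) (alpha e)) (eplus HM (chi (lambda e) ⋅ tm (e |: F) (omega e))).
Proof.
move=> HeF.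
rewrite tau_minusE [tm (e |: F) (alpha e)]tau_minusE.
rewrite (bigD1 e) /=; last by rewrite HeF eqxx.
rewrite -emulA emulC; congr EM; congr EM.
- apply: eq_big => i.
    by rewrite !inE negb_or [_ && (i != e)]andbC andbA.
  move=> /andP [/andP [HiF /eqP Ha] Hne].
  rewrite /tau_minus setUCA (@tau_minus_fuel_setU1_unreachable _ (i |: F) _ e) //.
  move=> _; apply: contra (cut_edge_omega_alpha Hac i) => Hc.
  by rewrite Ha; apply: connect_minus_sub Hc; apply: subsetUl.
- apply: eq_big => i.
    rewrite !inE negb_or; case: (eqVneq i e) => [->|] //=.
    by rewrite HeF /=; apply/negbTE; rewrite eq_sym; apply: (alpha_neq_omega Hac).
  move=> /andP [HiF /eqP Ho].
  rewrite /tau_minus setUCA (@tau_minus_fuel_setU1_unreachable _ (i |: F) _ e) //.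
  move=> _; apply: contra (cut_edge_alpha_omega Hac i) => Hc.
  by rewrite Ho; apply: connect_minus_sub Hc; apply: subsetUl.
Qed.

Lemma tau_minus_split_in F e : e \notin F ->
  tm F (omega e) =
  EM (estar HM (tm (e |: F) (alpha e) ⋅ chi (lambda e))) (tm (e |: F) (omega e)).
Proof.
move=> HeF.
rewrite tau_minusE [tm (e |: F) (omega e)]tau_minusE.
rewrite [X in EM _ X](bigD1 e) /=; last by rewrite HeF eqxx.
rewrite emulC -emulA; congr EM; rewrite emulC; congr EM.
- apply: eq_big => i.
    rewrite !inE negb_or; case: (eqVneq i e) => [->|] //=.
    by rewrite HeF /=; apply/negbTE; apply: (alpha_neq_omega Hac).
  move=> /andP [HiF /eqP Ha].
  rewrite /tau_minus setUCA (@tau_minus_fuel_setU1_unreachable _ (i |: F) _ e) //.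
  have Hne : i != e by apply/eqP => Hie; subst i; move: (alpha_neq_omega Hac e); rewrite Ha eqxx.
  have HeiF : e \notin i |: F by rewrite !inE negb_or eq_sym Hne.
  move=> _; apply: contra (cut_edge_omega_alpha Hac i) => Hc.
  have Hc2 : connect (adj_minus (i |: F)) (omega i) (omega e)
    by rewrite -connect_minus_alpha_omega.
  by rewrite Ha; apply: connect_minus_sub Hc2; apply: subsetUl.
- apply: eq_big => i.
    by rewrite !inE negb_or [_ && (i != e)]andbC andbA.
  move=> /andP [/andP [HiF /eqP Ho] Hne].
  rewrite /tau_minus setUCA (@tau_minus_fuel_setU1_unreachable _ (i |: F) _ e) //.
  have HeiF : e \notin i |: F by rewrite !inE negb_or eq_sym Hne.
  move=> _; apply: contra (cut_edge_alpha_omega Hac i) => Hc.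
  have Hc2 : connect (adj_minus (i |: F)) (alpha i) (omega e)
    by rewrite -connect_minus_alpha_omega.
  by rewrite Ho; apply: connect_minus_sub Hc2; apply: subsetUl.
Qed.

Section Morphism.
Variables (gv : vert X -> vert X) (ge : edge X -> edge X) (H : {set edge X}).
Hypotheses (ge_alpha : forall e, alpha (ge e) = gv (alpha e))
  (ge_omega : forall e, omega (ge e) = gv (omega e))
  (ge_lambda : forall e, lambda (ge e) = lambda e)
  (ge_notin : forall e, ge e \notin H).
Local Notation le := (idm_le (adequate_comm_idem HM)).

Lemma tau_minus_morph_le n F x : le (tm H (gv x)) (T n F x).
Proof.
elim: n F x => [|n IH] F x; first by rewrite /idm_le /= Monoid.mulm1.
rewrite /=; apply: idm_le_mul; apply: idm_le_big => i /andP [HiF /eqP <-] {x}.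
- have IHi := IH (i |: F) (omega i).
  rewrite -ge_omega (tau_minus_split_in (ge_notin i)) in IHi.
  rewrite -ge_alpha (tau_minus_split_out (ge_notin i)).
  rewrite /idm_le; apply: ival_inj; rewrite /= ge_lambda.
  apply: (le_plus_of_le_star HM); try exact: idmP.
  by move/(congr1 (@ival M)): IHi; rewrite /= ge_lambda.
- have IHi := IH (i |: F) (alpha i).
  rewrite -ge_alpha (tau_minus_split_out (ge_notin i)) in IHi.
  rewrite -ge_omega (tau_minus_split_in (ge_notin i)).
  rewrite /idm_le; apply: ival_inj; rewrite /= ge_lambda.
  apply: (le_star_of_le_plus HM); try exact: idmP.
  by move/(congr1 (@ival M)): IHi; rewrite /= ge_lambda.
Qed.

End Morphism.

Lemma set_seq_cat (T : finType) (a b : seq T) :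
  [set x in a ++ b] = [set x in a] :|: [set x in b].
Proof. by apply/setP => x; rewrite !inE mem_cat. Qed.

Lemma set_seq_rcons (T : finType) (e : T) (a : seq T) :
  [set x in rcons a e] = e |: [set x in a].
Proof. by apply/setP => x; rewrite !inE mem_rcons inE. Qed.

Section Trunk.
Variables (H : {set edge X}) (u0 w0 : vert X) (s : seq (edge X)).
Hypotheses (Hs : dpath u0 s w0) (HsH : all (fun e => e \notin H) s).

Local Notation tm_trunk v := (tm (H :|: [set x in s]) v).
Local Notation vtx p := (last u0 (map (@omega _ X) p)).

Definition trunk_pairs (q : seq (edge X)) : seq (M * idm M) :=
  [seq (chi (lambda e), tm_trunk (omega e)) | e <- q].

Lemma trunk_split p e q : s = p ++ e :: q ->
  [/\ dpath u0 p (alpha e), dpath (omega e) q w0, e \notin p, e \notin q & e \notin H].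
Proof.
move=> Hsp; have Hs' := Hs; have HsH' := HsH; rewrite Hsp in Hs' HsH'.
have [Hp Hq] := dpath_split Hs'.
split => //.
- exact: (dpath_alpha_notin Hac Hp).
- exact: (dpath_omega_notin Hac Hq (erefl _)).
- by move: HsH'; rewrite all_cat /= => /and3P [].
Qed.

Lemma trunk_vertex_alpha p e q : s = p ++ e :: q -> vtx p = alpha e.
Proof. by move=> /trunk_split [Hp _ _ _ _]; rewrite -(dpath_last Hp). Qed.

Lemma tau_minus_trunk_left F p e q x : s = p ++ e :: q -> e \in F ->
  x \in u0 :: map (@omega _ X) p -> tm (F :|: [set y in q]) x = tm F x.
Proof.
move=> Hsp HeF Hx; rewrite /tau_minus tau_minus_fuel_setU_unreachable // => e' He' _.
have Hsep : ~~ connect (adj_minus [set e]) x (alpha e').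
  apply: (dpath_edge_separates Hac (p := p) (q := q)); first by rewrite -Hsp; apply: Hs.
  - exact: Hx.
  - by have [_ Hq _ _ _] := trunk_split Hsp; apply: dpath_alpha_mem Hq He'.
by apply: contra Hsep; apply: connect_minus_sub; rewrite sub1set.
Qed.

Lemma tau_minus_trunk_right F p e q y : s = p ++ e :: q -> e \in F ->
  y \in omega e :: map (@omega _ X) q -> tm (F :|: [set z in p]) y = tm F y.
Proof.
move=> Hsp HeF Hy; rewrite /tau_minus tau_minus_fuel_setU_unreachable // => e' He' _.
have Hsep : ~~ connect (adj_minus [set e]) (alpha e') y.
  apply: (dpath_edge_separates Hac (p := p) (q := q)); first by rewrite -Hsp; apply: Hs.
  - by have [Hp _ _ _ _] := trunk_split Hsp; apply: dpath_alpha_mem Hp He'.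
  - exact: Hy.
by rewrite connect_minus_sym; apply: contra Hsep; apply: connect_minus_sub; rewrite sub1set.
Qed.

Lemma tau_minus_trunk_plus_nest q p : s = p ++ q ->
  tm (H :|: [set x in p]) (vtx p) = plus_nest (tm_trunk (vtx p)) (trunk_pairs q) :> M.
Proof.
elim: q p => [|e q IH] p Hsp; first by rewrite /= Hsp cats0.
have [Hp Hq HeP HeQ HeH] := trunk_split Hsp.
have Hv := trunk_vertex_alpha Hsp.
have HeF : e \notin H :|: [set x in p] by rewrite inE negb_or HeH inE.
rewrite Hv (tau_minus_split_out HeF) /=.
have Hsp' : s = rcons p e ++ q by rewrite Hsp cat_rcons.
have := IH _ Hsp'; rewrite map_rcons last_rcons => <-.
rewrite -setUCA -set_seq_rcons; congr (_ ⋅ pl (_ ⋅ _)).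
rewrite -(tau_minus_trunk_left (p := p) (e := e) (q := q)) //.
- by rewrite Hsp' set_seq_cat setUA.
- by rewrite !inE mem_rcons mem_head orbT.
- by rewrite -Hv mem_last.
Qed.

Lemma tau_minus_trunk_prod q p (L : M) : s = p ++ q ->
  tm (H :|: [set x in q]) (vtx p) = L ⋅ tm_trunk (vtx p) :> M ->
  tm H (vtx p) ⋅ \big[@mmul M/mone M]_(e <- q) (chi (lambda e) ⋅ tm H (omega e))
  = star_nest L (tm_trunk (vtx p)) (trunk_pairs q).
Proof.
elim: q p L => [|e q IH] p L Hsp HL.
  by rewrite big_nil mmul1r /= -HL set_nil setU0.
have [Hp Hq HeP HeQ HeH] := trunk_split Hsp.
have Hv := trunk_vertex_alpha Hsp.
have Hsp' : s = rcons p e ++ q by rewrite Hsp cat_rcons.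
have Hw : vtx (rcons p e) = omega e by rewrite map_rcons last_rcons.
have left_alpha : tm (e |: H) (alpha e) = L ⋅ tm_trunk (alpha e) :> M.
  rewrite -Hv -HL -(tau_minus_trunk_left (p := p) (e := e) (q := q)) //.
  - by rewrite set_cons setUCA setUA.
  - by rewrite !inE eqxx.
  - by rewrite mem_last.
have right_omega : tm (e |: H) (omega e) = plus_nest (tm_trunk (omega e)) (trunk_pairs q) :> M.
  rewrite -Hw -(tau_minus_trunk_plus_nest Hsp') Hw.
  rewrite -(tau_minus_trunk_right (p := p) (e := e) (q := q)) //.
  - by rewrite set_seq_rcons setUCA setUA.
  - by rewrite !inE eqxx.
  - by rewrite mem_head.
have next_hyp : tm (H :|: [set x in q]) (omega e) =
    mstar (L ⋅ tm_trunk (alpha e) ⋅ chi (lambda e)) ⋅ tm_trunk (omega e) :> M.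
  have HeF : e \notin H :|: [set x in q] by rewrite inE negb_or HeH inE.
  rewrite (tau_minus_split_in HeF) /= setUCA -set_cons -Hv HL Hv; congr (_ ⋅ _).
  rewrite -(tau_minus_trunk_right (p := p) (e := e) (q := q)) //.
  - by rewrite Hsp set_seq_cat [[set x in p] :|: _]setUC setUA.
  - by rewrite !inE eqxx orbT.
  - by rewrite mem_head.
have := IH _ _ Hsp'; rewrite Hw => /(_ _ next_hyp) IH'.
rewrite big_cons Hv (tau_minus_split_out HeH) /= left_alpha right_omega.
by rewrite -(mmulA (chi (lambda e))) IH' mmulA.
Qed.

Lemma tau_minus_reroot :
  tm H u0 ⋅ \big[@mmul M/mone M]_(e <- s) (chi (lambda e) ⋅ tm H (omega e)) =
  tm_trunk u0 ⋅ \big[@mmul M/mone M]_(e <- s) (chi (lambda e) ⋅ tm_trunk (omega e)).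
Proof.
have := @tau_minus_trunk_prod s [::] (mone M) erefl; rewrite /= mmul1l => /(_ erefl) ->.
rewrite -[star_nest _ _ _]mmul1l (star_nest_pair_prod HM _ (idem1 M) (idmP _)) ?mmul1l //.
by rewrite /pair_prod big_map.
Qed.

End Trunk.

End AcyclicTau.

Section Rho.
Variables (Sigma : Type) (M : monoid) (HM : adequate M) (chi : Sigma -> M).
Local Notation tm := (tau_minus HM chi).
Implicit Types X Y : sgraph Sigma.

Lemma dpath_morph X Y (phi : vert X -> vert Y) (psi : edge X -> edge Y) :
  (forall e, alpha (psi e) = phi (alpha e)) -> (forall e, omega (psi e) = phi (omega e)) ->
  forall u s w, dpath u s w -> dpath (phi u) (map psi s) (phi w).
Proof.
move=> Ha Ho u s; elim: s u => [|e s IH] u w; first by move=> /eqP ->; rewrite /dpath /= eqxx.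
by rewrite !dpath_cons /= Ha Ho => /andP [/eqP -> /IH ->]; rewrite eqxx.
Qed.

Lemma dpath_pull X Y (phi : vert X -> vert Y) (psi : edge X -> edge Y) :
  injective phi ->
  (forall e, alpha (psi e) = phi (alpha e)) -> (forall e, omega (psi e) = phi (omega e)) ->
  forall u s w, all (fun e => e \in codom psi) s -> dpath (phi u) s (phi w) ->
  exists2 s', dpath u s' w & map psi s' = s.
Proof.
move=> phi_inj Ha Ho u s w; elim: s u => [|e s IH] u /=.
  by move=> _ /eqP /phi_inj ->; exists [::]; rewrite /dpath /=.
move=> /andP [/codomP [e' ->] Hall]; rewrite dpath_cons Ha Ho (inj_eq phi_inj).
move=> /andP [Ha' /(IH _ Hall) [s' Hs' <-]].
by exists (e' :: s'); rewrite // dpath_cons Ha'.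
Qed.

Lemma trunk_dpath X s : dpath (startv X) s (endv X) -> dpath (startv X) (trunk X) (endv X).
Proof.
move=> Hs; apply: (epsilon_spec (inhabits [::]) (fun s => dpath (startv X) s (endv X))).
by exists s.
Qed.

(* Directed paths in a tree are unique, so an endomorphism fixes the trunk. *)
Lemma trunk_sub_codom X (fv : vert X -> vert X) (fe : edge X -> edge X) :
  uacyclic X -> is_morph fv fe -> dpath (startv X) (trunk X) (endv X) ->
  all (fun e => e \in codom fe) (trunk X).
Proof.
move=> Hac [Ha Ho _ Hst Hen] HtrX.
have <- : map fe (trunk X) = trunk X.
  by apply: (dpath_uniq Hac _ HtrX); rewrite -{1}Hst -Hen; apply: dpath_morph.
by apply/allP => _ /mapP [e _ ->]; apply: codom_f.
Qed.

Lemma imset_seq (A B : finType) (f : A -> B) (s : seq A) :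
  f @: [set x in s] = [set x in map f s].
Proof.
apply/setP => y; rewrite inE; apply/imsetP/mapP => -[x Hx ->]; exists x => //.
  by rewrite inE in Hx.
by rewrite inE.
Qed.

Definition embeds_off X Y (G : {set edge X}) (phi : vert Y -> vert X)
    (psi : edge Y -> edge X) : Prop :=
  [/\ is_morph phi psi, injective phi, injective psi &
      forall e, (e \notin G) = (e \in codom psi)].

Lemma embeds_off_id X : embeds_off (set0 : {set edge X}) id id.
Proof.
split; [by split | exact: inj_id | exact: inj_id | move=> e].
by rewrite in_set0; apply/esym/codomP; exists e.
Qed.

Lemma retract_embeds X Y (fv : vert X -> vert X) (fe : edge X -> edge X)
    (Hr : is_retraction fv fe) :
  isomorphic (retract Hr) Y ->
  exists phi psi, embeds_off [set e | e \notin codom fe] (Y := Y) phi psi.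
Proof.
move=> [fv' [fe' [[Ha Ho Hl Hs He] [gv Hgv1 Hgv2] [ge Hge1 Hge2]]]].
exists (fun y => val (gv y)), (fun e => val (ge e)); split.
- split=> [e|e|e||].
  + by have := Ha (ge e); rewrite Hge2 => ->; rewrite Hgv1.
  + by have := Ho (ge e); rewrite Hge2 => ->; rewrite Hgv1.
  + by have := Hl (ge e); rewrite Hge2 => ->.
  + by rewrite -Hs Hgv1.
  + by rewrite -He Hgv1.
- exact: inj_comp val_inj (can_inj Hgv2).
- exact: inj_comp val_inj (can_inj Hge2).
move=> e; rewrite inE negbK; apply/idP/codomP => [He'|[e' ->]]; last exact: valP.
by exists (fe' (exist _ e He')); rewrite Hge1.
Qed.

Lemma rho_embed X Y (G : {set edge X}) phi psi :
  uacyclic X -> dpath (startv X) (trunk X) (endv X) ->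
  all (fun e => e \notin G) (trunk X) -> embeds_off G (Y := Y) phi psi ->
  rho chi Y =
  tm G (startv X) ⋅ \big[@mmul M/mone M]_(e <- trunk X) (chi (lambda e) ⋅ tm G (omega e)).
Proof.
move=> Hac HtrX HtrG [[Ha Ho Hl Hs He] phi_inj psi_inj HG].
have HtrY : dpath (startv Y) (trunk Y) (endv Y).
  have [s' Hs' _] : exists2 s', dpath (startv Y) s' (endv Y) & map psi s' = trunk X.
    apply: (dpath_pull phi_inj Ha Ho); first by apply/allP => e /(allP HtrG); rewrite HG.
    by rewrite Hs He.
  exact: trunk_dpath Hs'.
have Hmap : map psi (trunk Y) = trunk X.
  by apply: (dpath_uniq Hac _ HtrX); rewrite -Hs -He; apply: dpath_morph.
have HNY : #|edge Y| <= #|edge X| := leq_card psi psi_inj.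
set TX := G :|: [set e in trunk X].
have Htransport y :
    tau_minus_fuel HM chi #|edge X| [set e in trunk Y] y = tm TX (phi y).
  rewrite (@tau_minus_fuel_embed _ _ HM chi _ _ phi psi G) //.
  - by rewrite /TX imset_seq Hmap.
  - by move=> e; rewrite HG codom_f.
  - by move=> h e; rewrite HG => /codomP [e' ->] _; exists e'.
rewrite /rho (tau_component HM chi _ _ HNY) Htransport Hs.
under eq_bigr => e _ do rewrite (tau_component HM chi _ _ HNY) Htransport -Ho -Hl.
rewrite -(big_map psi xpredT (fun e => chi (lambda e) ⋅ tm TX (omega e))) Hmap.
by rewrite -(tau_minus_reroot HM chi Hac HtrX HtrG).
Qed.

Lemma tau_minus_retract X (fv : vert X -> vert X) (fe : edge X -> edge X) v :
  uacyclic X -> is_retraction fv fe -> v \in codom fv ->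
  tm [set e | e \notin codom fe] v = tm set0 v.
Proof.
move=> Hac [[Ha Ho Hl _ _] Hfv _] /codomP [v' ->].
apply: (@idm_le_anti _ (adequate_comm_idem HM)).
- have fe_notin e : fe e \notin [set e | e \notin codom fe] by rewrite inE negbK codom_f.
  by have := tau_minus_morph_le HM chi Hac Ha Ho Hl fe_notin #|edge X| set0 (fv v'); rewrite Hfv.
- have id_notin e : id e \notin (set0 : {set edge X}) by rewrite in_set0.
  exact: (tau_minus_morph_le HM chi Hac (gv := id) (fun e => erefl) (fun e => erefl)
           (fun e => erefl) id_notin).
Qed.

End Rho.

Theorem corollary5p13 (Sigma : Type) (M : monoid) (HM : adequate M)
  (chi : Sigma -> M) (X Y : sgraph Sigma) (HX : is_tree X)
  (fv : vert X -> vert X) (fe : edge X -> edge X)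
  (Hr : is_retraction fv fe)
  (Hp : pruned (retract Hr))
  (Hiso : isomorphic (retract Hr) Y) :
  rho chi X = rho chi Y.
Proof.
have [_ Hac [s Hs]] := HX.
have HtrX := trunk_dpath Hs.
have Hmorph := retraction_morph Hr.
have HtrR := trunk_sub_codom Hac Hmorph HtrX.
have [phi [psi Hemb]] := retract_embeds Hiso.
have HtrG : all (fun e => e \notin [set e | e \notin codom fe]) (trunk X).
  by apply/allP => e /(allP HtrR); rewrite inE negbK.
rewrite (rho_embed HM chi Hac HtrX _ (embeds_off_id X)); last first.
  by apply/allP => e _; rewrite in_set0.
rewrite (rho_embed HM chi Hac HtrX HtrG Hemb).
have [_ Ho _ Hst _] := Hmorph.
congr (_ ⋅ _); first by rewrite (tau_minus_retract _ _ Hac Hr) // -Hst codom_f.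
apply: eq_big_seq => e /(allP HtrR) /codomP [e' ->].
by rewrite (tau_minus_retract _ _ Hac Hr) // Ho codom_f.
Qed.
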